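(* Let $X_n(d_1)\subset\mathbb{C}P^{n+1}$ be a nonsingular complex hypersurface of degree $d_1$ with $c_1=n+2-d_1<0$. Then $(-1)^n{\rm Td}(X_n(d_1))\geqslant n+1$.
   Context: The Todd genus of a compact complex $n$-manifold $M$ with formal Chern roots $x_1,\dots,x_n$ is ${\rm Td}(M)=\big(\prod_i\frac{x_i}{1-e^{-x_i}}\big)[M]$. *)

From mathcomp Require Import all_boot all_order all_algebra.
Set Implicit Arguments. Unset Strict Implicit. Unset Printing Implicit Defensive.
Import Order.TTheory GRing.Theory Num.Theory.
Local Open Scope ring_scope.

(* Coefficients of the power series (1 - e^{-x})/x = sum_k (-1)^k x^k/(k+1)! *)
Definition gcoef (k : nat) : rat := (-1) ^+ k / (k.+1)`!%:R.

(* bseq m = [:: b_0; ...; b_m], the coefficients of the Todd series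
   x/(1 - e^{-x}) = sum_k b_k x^k, computed as the inverse series of the above:
   b_0 = 1,  b_m = - sum_{j=1}^m gcoef j * b_{m-j}. *)
Fixpoint bseq (m : nat) : seq rat :=
  match m with
  | 0 => [:: 1]
  | m'.+1 => let s := bseq m' in
      rcons s (- \sum_(j < m'.+1) gcoef j.+1 * nth 0 s (m' - j))
  end.

Definition todd_coef (k : nat) : rat := nth 0 (bseq k) k.

(* Truncation (mod x^{N+1}) of Q(x) = x/(1-e^{-x}). *)
Definition todd_series (N : nat) : {poly rat} := \poly_(i < N.+1) todd_coef i.

(* Truncation (mod x^{N+1}) of 1/Q(d x) = (1 - e^{-dx})/(dx). *)
Definition inv_todd_series_scaled (N d : nat) : {poly rat} :=
  \poly_(i < N.+1) (gcoef i * (d%:R) ^+ i).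

(* With h the hyperplane class, T X (+) N = (n+2) O(1) - O (Euler sequence),
   N = O(d)|_X, so the formal Chern roots of TX are (stably) n+2 copies of h
   with one root d h removed; hence
     Td(X) = ( Q(h)^{n+2} / Q(d h) ) [X],  with  h^n [X] = d,
   i.e. d times the coefficient of h^n. *)
Definition todd_hypersurface (n d : nat) : rat :=
  d%:R * ((todd_series n) ^+ n.+2 * inv_todd_series_scaled n d)`_n.

From Pilot Require Import Defs.
From mathcomp Require Import all_boot all_order all_algebra zify ring lra.
Import Order.TTheory GRing.Theory Num.Theory.
Local Open Scope ring_scope.

(* Put y = 1 - e^(-x) and Q = x / y, so that y' = e^(-x) = 1 - y and
   d x / Q(d x) = 1 - e^(-d x) = 1 - (1 - y)^d.  Then
   Td(X_n(d)) = d [x^n] Q^(n+2) / Q(d x) = [x^(n+1)] Q^(n+2) (1 - (1 - y)^d).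
   Writing 1 - (1 - y)^d = (1 - y) sum_k c_k y^k + y^d, each term becomes
   [x^(n+1)] Q^(n+2) y' y^k, the residue of y' / y^(n+2-k), which is 1 for
   k = n + 1 and 0 otherwise, while y^d contributes nothing since d > n + 1.
   Hence Td(X_n(d)) = c_(n+1) = 1 + (-1)^n C(d-1, n+1), and C(d-1, n+1) >= n+2.
   All series are handled through polynomial truncations compared modulo x^N. *)

Section TruncatedCongruence.

Context {R : comNzRingType}.

Definition eqmodX (N : nat) (p q : {poly R}) := forall i, (i < N)%N -> p`_i = q`_i.

Lemma eqmodX_refl N p : eqmodX N p p. Proof. by []. Qed.

Lemma eqmodX_sym {N p q} : eqmodX N p q -> eqmodX N q p.
Proof. by move=> pq i ltiN; rewrite pq. Qed.

Lemma eqmodX_trans {N p q r} : eqmodX N p q -> eqmodX N q r -> eqmodX N p r.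
Proof. by move=> pq qr i ltiN; rewrite pq ?qr. Qed.

Lemma eqmodXW {N M p q} : (M <= N)%N -> eqmodX N p q -> eqmodX M p q.
Proof. by move=> leMN pq i ltiM; apply: pq; apply: leq_trans leMN. Qed.

Lemma eqmodXB {N p q r s} :
  eqmodX N p q -> eqmodX N r s -> eqmodX N (p - r) (q - s).
Proof. by move=> pq rs i ltiN; rewrite !coefB pq ?rs. Qed.

Lemma eqmodXMl {N} r {p q} : eqmodX N p q -> eqmodX N (r * p) (r * q).
Proof.
move=> pq i ltiN; rewrite !coefM; apply: eq_bigr => j _; rewrite pq //.
exact: leq_ltn_trans (leq_subr _ _) ltiN.
Qed.

Lemma eqmodXMr {N} r {p q} : eqmodX N p q -> eqmodX N (p * r) (q * r).
Proof. by rewrite ![_ * r]mulrC; apply: eqmodXMl. Qed.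

Lemma eqmodXM {N p q r s} :
  eqmodX N p q -> eqmodX N r s -> eqmodX N (p * r) (q * s).
Proof. by move=> pq rs; apply: eqmodX_trans (eqmodXMr r pq) (eqmodXMl q rs). Qed.

Lemma eqmodXX {N p q} k : eqmodX N p q -> eqmodX N (p ^+ k) (q ^+ k).
Proof.
move=> pq; elim: k => [|k IHk]; first exact: eqmodX_refl.
by rewrite !exprS; apply: eqmodXM.
Qed.

Lemma eqmodX_deriv {N p q} : eqmodX N.+1 p q -> eqmodX N p^`() q^`().
Proof. by move=> pq i ltiN; rewrite !coef_deriv pq. Qed.

Lemma eqmodX_deriv_inv {N} {T G : {poly R}} :
  eqmodX N.+1 (T * G) 1 -> eqmodX N T^`() (- (T ^+ 2 * G^`())).
Proof.
move=> TG1.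
have dTG : eqmodX N (T * (T * G)^`()) 0.
  by have := eqmodXMl T (eqmodX_deriv TG1); rewrite derivC mulr0.
have dT : eqmodX N (T^`() * (T * G)) T^`().
  by have := eqmodXMl T^`() (eqmodXW (leqnSn N) TG1); rewrite mulr1.
apply: eqmodX_trans (eqmodX_sym dT) _.
have -> : T^`() * (T * G) = T * (T * G)^`() - T ^+ 2 * G^`().
  by rewrite derivM; ring.
by rewrite -[X in eqmodX _ _ X]sub0r; apply: eqmodXB dTG (eqmodX_refl _ _).
Qed.

End TruncatedCongruence.

Lemma one_sub_pow_split (R : comNzRingType) (y : R) d :
  1 - (1 - y) ^+ d.+1 =
  (1 - y) * \sum_(k < d.+1) ((1 - (-1) ^+ k *+ 'C(d, k)) * y ^+ k) + y ^+ d.+1.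
Proof.
have geom := subrXX 1 y d.+1; rewrite expr1n /= in geom.
have -> : \sum_(k < d.+1) ((1 - (-1) ^+ k *+ 'C(d, k)) * y ^+ k)
    = \sum_(k < d.+1) 1 ^+ (d - k) * y ^+ k - (1 - y) ^+ d.
  by rewrite exprBn -sumrB; apply: eq_bigr => k _; rewrite !expr1n; ring.
by rewrite mulrBr -geom exprS; ring.
Qed.

Section CharZero.

Context {R : fieldType}.
Hypothesis R_char0 : [pchar R] =i pred0.

Lemma natr_neq0 k : (k%:R : R) != 0 = (k != 0)%N.
Proof. by rewrite (pcharf0P R).1. Qed.

Lemma natr_fact_neq0 k : (k`!%:R : R) != 0.
Proof. by rewrite natr_neq0 -lt0n fact_gt0. Qed.

Section Residue.

Variables (N : nat) (T G : {poly R}).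
Hypothesis TG1 : eqmodX N.+1 (T * G) 1.

(* The coefficient of x^m in T^(m+1) y' with y = x G = x / T is the residue
   of y' / y^(m+1); for m > 0 it vanishes because y' / y^(m+1) is a
   derivative. *)
Lemma coef_pow_derivXG m : (m <= N)%N ->
  (T ^+ m.+1 * ('X * G)^`())`_m = (m == 0)%:R.
Proof.
move=> lemN; rewrite derivM derivX mul1r mulrDr coefD.
have -> : (T ^+ m.+1 * G)`_m = (T ^+ m)`_m.
  by rewrite exprSr -mulrA; have := eqmodXMl (T ^+ m) TG1; rewrite mulr1; apply.
case: m lemN => [|m] leSmN; first by rewrite expr0 coefC mulrCA coefXM addr0.
rewrite mulrCA coefXM /=.
have dTm : eqmodX N (T ^+ m.+1)^`() (- (T ^+ m.+2 * G^`()) *+ m.+1).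
  move=> i ltiN; rewrite deriv_exp !coefMn; congr (_ *+ _).
  by rewrite (eqmodXMr (T ^+ m) (eqmodX_deriv_inv TG1)) // mulNr mulrAC -exprD.
have nz : (m.+1%:R : R) != 0 by rewrite natr_neq0.
have := dTm m leSmN; rewrite coef_deriv coefMn coefN => /eqP.
by rewrite -subr_eq0 -mulrnBl opprK -(mulr_natr _ m.+1) mulf_eq0 (negPf nz) orbF => /eqP.
Qed.

Lemma coef_pow_derivXG_powXG k : (0 < k)%N ->
  (T ^+ N.+2 * ('X * G)^`() * ('X * G) ^+ k)`_N.+1 = (k == N.+1)%:R.
Proof.
move=> k_gt0; rewrite exprMn mulrCA coefXnM.
case: ltnP => [ltNk | lekN]; first by rewrite gtn_eqF.
have lemN : (N.+1 - k <= N)%N by lia.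
have -> : T ^+ N.+2 * ('X * G)^`() * G ^+ k
    = T ^+ (N.+1 - k).+1 * ('X * G)^`() * (T * G) ^+ k.
  have eN : N.+2 = ((N.+1 - k).+1 + k)%N by lia.
  by rewrite {1}eN exprD exprMn; ring.
rewrite (eqmodXMl _ (eqmodXX k TG1)) ?expr1n ?mulr1 ?coef_pow_derivXG //.
by rewrite subn_eq0 eqn_leq lekN.
Qed.

Hypothesis XG_deriv : eqmodX N.+2 (1 - 'X * G) ('X * G)^`().

Lemma coef_one_sub_pow d : (N.+1 < d)%N ->
  (T ^+ N.+2 * (1 - (1 - 'X * G) ^+ d))`_N.+1 = 1 + (-1) ^+ N *+ 'C(d.-1, N.+1).
Proof.
case: d => // d ltNd; rewrite one_sub_pow_split mulrDr coefD.
have -> : (T ^+ N.+2 * ('X * G) ^+ d.+1)`_N.+1 = 0.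
  by rewrite exprMn mulrCA coefXnM ltNd.
rewrite addr0 mulrA mulrAC (eqmodXMl _ XG_deriv) // mulr_sumr mulr_suml coef_sum.
have term k : (T ^+ N.+2 * ((1 - (-1) ^+ k *+ 'C(d, k)) * ('X * G) ^+ k)
              * ('X * G)^`())`_N.+1 = (1 - (-1) ^+ k *+ 'C(d, k)) * (k == N.+1)%:R.
  have -> : (1 - (-1) ^+ k *+ 'C(d, k) : {poly R}) = (1 - (-1) ^+ k *+ 'C(d, k))%:P.
    by rewrite rmorphB rmorph1 rmorphMn rmorph_sign.
  rewrite mulrCA -mulrA mulrAC coefCM.
  case: (posnP k) => [-> | k_gt0]; first by rewrite bin0 expr0 mulr1n subrr !mul0r.
  by rewrite coef_pow_derivXG_powXG.
rewrite (eq_bigr _ (fun (k : 'I_d.+1) _ => term k)) (bigD1 (Ordinal ltNd)) //= eqxx mulr1.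
rewrite big1 ?addr0 => [|k ne_k]; first by rewrite exprS mulN1r mulNrn opprK.
rewrite (_ : (k == N.+1 :> nat) = false) ?mulr0 //.
by apply: contraNF ne_k => /eqP eq_k; apply/eqP/val_inj.
Qed.

End Residue.

Definition texp (a : R) N : {poly R} := \poly_(i < N) (a ^+ i / i`!%:R).

Lemma texp0 N : eqmodX N (texp 0 N) 1.
Proof.
move=> i ltiN; rewrite coef_poly ltiN coefC.
by case: i ltiN => [|i] _; rewrite ?expr0 ?fact0 ?divr1 // expr0n mul0r.
Qed.

Lemma texpD a b N : eqmodX N (texp (a + b) N) (texp a N * texp b N).
Proof.
move=> i ltiN; rewrite coefM coef_poly ltiN addrC exprDn mulr_suml.
apply: eq_bigr => [[j /= ltji]] _; rewrite !coef_poly.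
rewrite (leq_ltn_trans (leq_subr j i) ltiN) (leq_ltn_trans _ ltiN) //.
have binE : ('C(i, j)%:R : R) = i`!%:R / (j`!%:R * (i - j)`!%:R).
  rewrite -(bin_fact (ltnSE ltji)) !natrM mulfK //.
  by rewrite mulf_neq0 // natr_fact_neq0.
rewrite -mulr_natr binE.
by field; rewrite !natr_fact_neq0.
Qed.

Lemma texpMn a d N : eqmodX N (texp (a *+ d) N) (texp a N ^+ d).
Proof.
elim: d => [|d IHd]; first exact: texp0.
by rewrite mulrSr exprSr; apply: eqmodX_trans (texpD _ _ _) (eqmodXMr _ IHd).
Qed.

Lemma eqmodX_texp a N M : (N <= M)%N -> eqmodX N (texp a M) (texp a N).
Proof. by move=> leNM i ltiN; rewrite !coef_poly ltiN (leq_trans ltiN). Qed.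

Lemma deriv_texp a N : (texp a N.+1)^`() = a *: texp a N.
Proof.
apply/polyP => i; rewrite coef_deriv coefZ !coef_poly ltnS.
case: ltnP => _; last by rewrite mul0rn mulr0.
rewrite -[_ *+ i.+1]mulr_natr factS natrM exprS.
by field; rewrite nat1r natr_fact_neq0 natr_neq0.
Qed.

End CharZero.

Lemma size_bseq m : size (Defs.bseq m) = m.+1.
Proof. by elim: m => //= m IHm; rewrite size_rcons IHm. Qed.

Lemma nth_bseq m i : (i <= m)%N -> nth 0 (Defs.bseq m) i = todd_coef i.
Proof.
elim: m => [|m IHm]; first by rewrite leqn0 => /eqP ->.
rewrite leq_eqVlt => /predU1P [-> // | ltim].
by rewrite /= nth_rcons size_bseq ltim IHm.
Qed.

Lemma todd_coefS m :
  todd_coef m.+1 = - \sum_(j < m.+1) gcoef j.+1 * todd_coef (m - j).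
Proof.
rewrite /todd_coef /= nth_rcons size_bseq ltnn eqxx.
by congr (- _); apply: eq_bigr => j _; rewrite nth_bseq // leq_subr.
Qed.

Lemma gcoef0 : gcoef 0 = 1.
Proof. by rewrite /gcoef expr0 divr1. Qed.

Lemma todd_series_mul_inv n m : (n <= m)%N ->
  eqmodX n.+1 (todd_series n * inv_todd_series_scaled m 1) 1.
Proof.
move=> lenm i ltin; rewrite coefMr coefC.
have coefE (j : 'I_i.+1) : (todd_series n)`_(i - j) * (inv_todd_series_scaled m 1)`_j
    = todd_coef (i - j) * gcoef j.
  have [lt1 lt2] : (i - j < n.+1)%N /\ (j < m.+1)%N by have := ltn_ord j; lia.
  by rewrite !coef_poly lt1 lt2 expr1n mulr1.
rewrite (eq_bigr _ (fun j _ => coefE j)).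
case: i {ltin coefE} => [|i]; first by rewrite big_ord1 gcoef0 mulr1.
rewrite big_ord_recl subn0 gcoef0 mulr1 todd_coefS /=.
rewrite [X in - X + _](_ : _ = \sum_(j < i.+1) todd_coef (i.+1 - bump 0 j) * gcoef (bump 0 j)).
  by rewrite addNr.
by apply: eq_bigr => j _; rewrite mulrC /bump /= add1n subSS.
Qed.

Lemma X_inv_todd_series_scaled n d :
  'X * inv_todd_series_scaled n d *+ d = 1 - texp (- d%:R) n.+2.
Proof.
apply/polyP => i; rewrite coefMn coefXM coefB coefC !coef_poly.
case: i => [|i] /=; first by rewrite expr0 fact0 divr1 subrr mul0rn.
rewrite sub0r -[(i.+1 < n.+2)%N]/(i < n.+1)%N.
case: ltnP => _; last by rewrite mul0rn oppr0.
rewrite /gcoef -[_ *+ d]mulr_natr exprS (exprNn (d%:R)).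
by field; rewrite pnatr_eq0 -lt0n fact_gt0.
Qed.

Lemma todd_hypersurface_closed n d : (n.+1 < d)%N ->
  todd_hypersurface n d = 1 + (-1) ^+ n *+ 'C(d.-1, n.+1).
Proof.
move=> ltnd; set T := todd_series n; set G := inv_todd_series_scaled n.+1 1.
have XG_texp : 'X * G = 1 - texp (-1) n.+3.
  by have := X_inv_todd_series_scaled n.+1 1; rewrite mulr1n.
have one_sub_XG : 1 - 'X * G = texp (-1) n.+3 by rewrite XG_texp subKr.
have XG_deriv : eqmodX n.+2 (1 - 'X * G) ('X * G)^`().
  rewrite one_sub_XG XG_texp derivB derivC (deriv_texp (pchar_num rat)) scaleNr scale1r.
  by rewrite sub0r opprK; apply: eqmodX_texp.
have XGd : eqmodX n.+2 ('X * inv_todd_series_scaled n d *+ d) (1 - (1 - 'X * G) ^+ d).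
  rewrite X_inv_todd_series_scaled one_sub_XG -mulNrn.
  apply: eqmodXB (eqmodX_refl _ _) (eqmodX_trans (texpMn (pchar_num rat) _ _ _) (eqmodXX _ _)).
  by apply: eqmodX_sym; apply: eqmodX_texp.
have -> : todd_hypersurface n d
    = (T ^+ n.+2 * ('X * inv_todd_series_scaled n d *+ d))`_n.+1.
  by rewrite mulrnAr coefMn mulrCA coefXM /= -mulr_natl.
rewrite (eqmodXMl (T ^+ n.+2) XGd) // (coef_one_sub_pow (pchar_num rat)) //.
exact: todd_series_mul_inv.
Qed.

Theorem lemma3p2 (n d : nat) (hc1 : (n.+2 < d)%N) :
  (n.+1)%:R <= (-1) ^+ n * todd_hypersurface n d :> rat.
Proof.
rewrite todd_hypersurface_closed ?(ltn_trans _ hc1) //.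
rewrite mulrDr mulr1 mulrnAr -exprMn mulrNN mulr1 expr1n.
have : (n.+2 <= 'C(d.-1, n.+1))%N.
  by rewrite -{1}(binSn n.+1); apply: leq_bin2l; lia.
rewrite -(ler_nat rat) -natr1 => binom_ge.
have sign_ge : -1 <= (-1) ^+ n :> rat.
  by rewrite -signr_odd; case: odd; rewrite ?expr0 ?expr1 //; lra.
lra.
Qed.
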